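(* Let $F$ be a graph of diameter $2$, $n=|V(F)|$, $t=\delta(F)$, and let $l>n$ be an integer. For every subgraph $Y$ of $F_{2l}$ that is isomorphic to $F$ and contains the vertex $2l$: (1) the edges $(1,2l),(2,2l),\dots,(t,2l)$ all belong to $Y$; (2) $Y$ is a subgraph of $X$.
   Context: All graphs are simple, finite, undirected; $\delta(F)$ is the minimum degree of $F$. $A_{2l-1}$ is the graph with vertex set $\{1,\dots,2l-1\}$ in which distinct $i,j$ are adjacent iff $|i-j|\le l-1$. $F_{2l}$ is obtained from $A_{2l-1}$ by adding a new vertex $2l$ joined exactly to $1,2,\dots,t$. $X$ is the subgraph of $F_{2l}$ induced by the vertex set $\{1,2,\dots,l+t-1\}\cup\{2l\}$. *)

From mathcomp Require Import all_boot.
Set Implicit Arguments. Unset Strict Implicit. Unset Printing Implicit Defensive.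

(* A simple graph F is a symmetric irreflexive relation e on a finType V. *)

Definition diam2 (V : finType) (e : rel V) : Prop :=
  (forall x y, x != y -> e x y \/ exists z, e x z /\ e z y) /\
  (exists x y, x != y /\ ~~ e x y).

Definition deg (V : finType) (e : rel V) (x : V) : nat := #|[set y | e x y]|.
Definition mindeg (V : finType) (e : rel V) : nat :=
  \big[minn/#|V|]_(x : V) deg e x.

Definition A_vert (l : nat) (i : nat) : bool := 1 <= i <= 2 * l - 1.
Definition A_adj (l : nat) (i j : nat) : bool :=
  [&& i != j, A_vert l i, A_vert l j & (i - j <= l - 1) && (j - i <= l - 1)].

Definition F2l_vert (l : nat) (i : nat) : bool := 1 <= i <= 2 * l.
Definition F2l_adj (l t : nat) (i j : nat) : bool :=
  [|| A_adj l i j, (i == 2 * l) && (1 <= j <= t) | (j == 2 * l) && (1 <= i <= t)].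

Definition X_vert (l t : nat) (i : nat) : bool := (1 <= i <= l + t - 1) || (i == 2 * l).
Definition X_adj (l t : nat) (i j : nat) : bool :=
  [&& X_vert l t i, X_vert l t j & F2l_adj l t i j].

Definition is_subgraph (N : nat) (P : pred nat) (adj : rel nat)
  (VY : {set 'I_N}) (EY : rel 'I_N) : Prop :=
  (forall v, v \in VY -> P v) /\
  (forall u v, EY u v -> [/\ u \in VY, v \in VY & adj u v]).

Definition iso_to (V : finType) (e : rel V) (N : nat)
  (VY : {set 'I_N}) (EY : rel 'I_N) : Prop :=
  exists f : V -> 'I_N,
    [/\ injective f, f @: [set: V] = VY & forall x y, e x y = EY (f x) (f y)].

From mathcomp Require Import all_boot zify.

Set Implicit Arguments.
Unset Strict Implicit.
Unset Printing Implicit Defensive.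

(* The vertex of Y at 2l has at least t = delta(F) neighbours in Y, all of them
   among the t neighbours 1, ..., t of 2l in F_{2l}; hence Y contains every
   edge (i, 2l) with i <= t. Every other vertex of Y lies within distance 2 of
   2l, hence is adjacent to some i <= t, and the neighbours in F_{2l} of such
   an i other than 2l are at most l + t - 1; so Y lies inside X. *)

Lemma geq_bigmin_seq (I : eqType) (r : seq I) (F : I -> nat) m i :
  i \in r -> \big[minn/m]_(j <- r) F j <= F i.
Proof.
elim: r => [//|a r IHr]; rewrite inE big_cons => /orP [/eqP ->|/IHr].
  exact: geq_minl.
exact: leq_trans (geq_minr _ _).
Qed.

Lemma mindeg_le_deg (V : finType) (e : rel V) (x : V) : mindeg e <= deg e x.
Proof. by apply: geq_bigmin_seq; rewrite mem_index_enum. Qed.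

Lemma mindeg_le_card (V : finType) (e : rel V) : mindeg e <= #|V|.
Proof.
rewrite /mindeg; apply: (big_ind (fun m => m <= #|V|)) => // [m n hm _|x _].
  exact: leq_trans (geq_minl m n) hm.
exact: max_card.
Qed.

Lemma card_ord_range n m k (A : {set 'I_n}) :
  (forall i, i \in A -> m <= i < m + k) -> #|A| <= k.
Proof.
move=> hA; rewrite cardE -(size_map val) -[k](size_iota m).
apply: uniq_leq_size; first by rewrite (map_inj_uniq val_inj) enum_uniq.
by move=> j /mapP [i]; rewrite mem_enum => /hA hi ->; rewrite mem_iota.
Qed.

Lemma F2l_adj_top l t j : t < 2 * l -> F2l_adj l t (2 * l) j -> 1 <= j <= t.
Proof.
rewrite /F2l_adj /A_adj /A_vert => ht /or3P
  [/and4P [_ /andP[_ h] _ _] | /andP [_ h] | /andP[/eqP hj /andP[h1 h2]]] //; lia.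
Qed.

Lemma F2l_adj_low l t i j : t < 2 * l -> 1 <= i <= t -> j != 2 * l ->
  F2l_adj l t i j -> 1 <= j <= l + t - 1.
Proof.
rewrite /F2l_adj /A_adj /A_vert => ht /andP[hi1 hi2] hj /or3P
  [/and4P [_ _ /andP[hj1 hj2] /andP[h1 h2]] | /andP [/eqP hi _] | /andP[/eqP hj' _]].
1-2: lia.
- by rewrite hj' eqxx in hj.
Qed.

Section EmbeddingAtTop.

Variables (V : finType) (e : rel V) (l : nat).
Variables (EY : rel 'I_(2 * l).+1) (f : V -> 'I_(2 * l).+1) (x0 : V).
Local Notation t := (mindeg e).

Hypothesis mindeg_lt : t < 2 * l.
Hypothesis f_inj : injective f.
Hypothesis f_adj : forall x y, e x y = EY (f x) (f y).
Hypothesis EY_F2l : forall u v, EY u v -> F2l_adj l t u v.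
Hypothesis f_x0 : f x0 = ord_max.

Lemma nbr_top_low y : e x0 y -> 1 <= f y <= t.
Proof.
by rewrite f_adj f_x0 => /EY_F2l; apply: F2l_adj_top.
Qed.

Lemma image_nbr_top : f @: [set y | e x0 y] = [set i | 1 <= val i <= t].
Proof.
apply/eqP; rewrite eqEcard; apply/andP; split.
  by apply/subsetP => i /imsetP [y]; rewrite !inE => /nbr_top_low h ->.
rewrite (card_imset _ f_inj); apply: leq_trans (mindeg_le_deg e x0).
by apply: (@card_ord_range _ 1) => i; rewrite inE add1n ltnS.
Qed.

Lemma EY_top (esym : symmetric e) (i : 'I_(2 * l).+1) :
  1 <= i <= t -> EY i ord_max.
Proof.
move=> hi; have : i \in f @: [set y | e x0 y] by rewrite image_nbr_top inE.
by case/imsetP => y; rewrite inE => hy ->; rewrite -f_x0 -f_adj esym.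
Qed.

Lemma X_vert_image
    (near_x0 : forall y, x0 != y -> e x0 y \/ exists z, e x0 z /\ e z y) y :
  X_vert l t (f y).
Proof.
rewrite /X_vert; have [-> | f_low] := eqVneq (val (f y)) (2 * l).
  exact: orbT.
rewrite orbF.
have : x0 != y by apply: contra f_low => /eqP <-; rewrite f_x0.
case/near_x0 => [/nbr_top_low | [z [/nbr_top_low hz]]]; first lia.
by rewrite f_adj => /EY_F2l /(F2l_adj_low mindeg_lt hz f_low) ->.
Qed.

End EmbeddingAtTop.

Theorem lemma4 (V : finType) (e : rel V)
  (esym : symmetric e) (eirr : irreflexive e) (hdiam : diam2 e)
  (l : nat) (hl : #|V| < l)
  (VY : {set 'I_(2 * l).+1}) (EY : rel 'I_(2 * l).+1)
  (hsub : is_subgraph (F2l_vert l) (F2l_adj l (mindeg e)) VY EY)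
  (hiso : iso_to e VY EY)
  (h2l : (ord_max : 'I_(2 * l).+1) \in VY) :
  (forall i : 'I_(2 * l).+1, 1 <= i <= mindeg e -> EY i ord_max) /\
  is_subgraph (X_vert l (mindeg e)) (X_adj l (mindeg e)) VY EY.
Proof.
have ht : mindeg e < 2 * l by have := mindeg_le_card e; lia.
have [f [f_inj f_VY f_adj]] := hiso.
have [_ EY_sub] := hsub.
have EY_F2l u v : EY u v -> F2l_adj l (mindeg e) u v by case/EY_sub.
have /imsetP [x0 _ top_fx0] : ord_max \in f @: [set: V] by rewrite f_VY.
have f_x0 : f x0 = ord_max by rewrite top_fx0.
have VY_X v : v \in VY -> X_vert l (mindeg e) v.
  rewrite -f_VY => /imsetP [y _ ->].
  exact: X_vert_image ht f_adj EY_F2l f_x0 (proj1 hdiam x0) y.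
split; first exact: EY_top ht f_inj f_adj EY_F2l f_x0 esym.
split=> // u v /EY_sub [hu hv huv].
by rewrite /X_adj !VY_X.
Qed.
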